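(* Let $\varphi_A(X):=\sum_{i=1}^nA_iXA_i^*$ ($n\in\mathbb N$ or $n=\infty$) be a $w^*$-continuous completely positive linear map on $B(\mathcal H)$ with $\|\varphi_A\|\le1$, and let $\varphi_A^\infty(I):=\text{SOT-}\lim_{k\to\infty}\varphi_A^k(I)$ (which exists). Then $\ker(I-\varphi_A^\infty(I))$ and $\ker\varphi_A^\infty(I)$ are mutually orthogonal, so that $\mathcal H=\mathcal M\oplus\ker(I-\varphi_A^\infty(I))\oplus\ker\varphi_A^\infty(I)$ with $\mathcal M$ the orthogonal complement of the other two, and the subspaces $\ker(I-\varphi_A^\infty(I))$ and $\ker\varphi_A^\infty(I)$ are invariant under each $A_i^*$. If in addition $\varphi_A^\infty(I)$ is an orthogonal projection, then $\mathcal H=\ker(I-\varphi_A^\infty(I))\oplus\ker\varphi_A^\infty(I)$ and both subspaces are reducing for each $A_i$. *)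

From HB Require Import structures.
From mathcomp Require Import all_boot all_order all_algebra.
From mathcomp Require Import complex.
From mathcomp Require Import reals.
Set Implicit Arguments. Unset Strict Implicit. Unset Printing Implicit Defensive.
Import Order.TTheory GRing.Theory Num.Theory.
Local Open Scope ring_scope.

Section Hilbert.
Variables (R : realType) (V : lmodType R[i]) (ip : V -> V -> R[i]).

Definition is_inner_product : Prop :=
  [/\ (forall (a : R[i]) x y z, ip (a *: x + y) z = a * ip x z + ip y z),
      (forall x y, ip y x = Num.conj (ip x y)),
      (forall x, 0 <= ip x x) &
      (forall x, ip x x = 0 -> x = 0)].

Definition hnorm (x : V) : R := Num.sqrt (complex.Re (ip x x)).

Definition hconv (u : nat -> V) (v : V) : Prop :=
  forall e : R, 0 < e -> exists N : nat, forall k, (N <= k)%N -> hnorm (u k - v) < e.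

Definition hcauchy (u : nat -> V) : Prop :=
  forall e : R, 0 < e -> exists N : nat,
    forall k l, (N <= k)%N -> (N <= l)%N -> hnorm (u k - u l) < e.

Definition is_hilbert : Prop :=
  is_inner_product /\ (forall u, hcauchy u -> exists v, hconv u v).

Definition is_linear_op (T : V -> V) : Prop :=
  forall (a : R[i]) x y, T (a *: x + y) = a *: T x + T y.

Definition bounded_by (T : V -> V) (M : R) : Prop :=
  forall x, hnorm (T x) <= M * hnorm x.

Definition bounded_op (T : V -> V) : Prop :=
  is_linear_op T /\ exists M : R, bounded_by T M.

Definition is_adjoint (T Ts : V -> V) : Prop :=
  forall x y, ip (T x) y = ip x (Ts y).

(* index set {i | i < n} for n : nat, or all of nat for n = infinity (None) *)
Definition in_index (n : option nat) (i : nat) : bool :=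
  if n is Some m then (i < m)%N else true.

Definition kraus_psum (n : option nat) (A As : nat -> V -> V)
  (X : V -> V) (x : V) (k : nat) : V :=
  \sum_(i < k | in_index n i) A i (X (As i x)).

Definition is_kraus_map (n : option nat) (A As : nat -> V -> V)
  (phi : (V -> V) -> (V -> V)) : Prop :=
  forall X, bounded_op X -> forall x, hconv (kraus_psum n A As X x) (phi X x).

(* ||phi|| <= 1 as a map on B(H): ||phi X|| <= ||X|| for all X in B(H) *)
Definition norm_le1 (phi : (V -> V) -> (V -> V)) : Prop :=
  forall X M, bounded_op X -> bounded_by X M -> bounded_by (phi X) M.

Definition sot_limit (T : nat -> V -> V) (D : V -> V) : Prop :=
  forall x, hconv (fun k => T k x) (D x).

Definition orth_projection (P : V -> V) : Prop :=
  (forall x, P (P x) = P x) /\ (forall x y, ip (P x) y = ip x (P y)).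

End Hilbert.

From Pilot Require Import Defs.
From HB Require Import structures.
From mathcomp Require Import all_boot all_order all_algebra.
From mathcomp Require Import complex.
From mathcomp Require Import reals.
From mathcomp Require Import boolp classical_sets.
From mathcomp Require Import ring lra.
Set Implicit Arguments. Unset Strict Implicit. Unset Printing Implicit Defensive.
Import Order.TTheory GRing.Theory Num.Theory.
Local Open Scope ring_scope.

(* The iterates T_k := phi^k(I) form a nonincreasing sequence of positive
   contractions: phi maps positive operators to positive operators, ||phi|| <= 1
   keeps phi(I) below I, and phi is monotone, so T_1 <= T_0 propagates along the
   sequence.  For 0 <= T_k - T_m <= I one has ||(T_k - T_m) x||^2 <=
   <(T_k - T_m) x, x>, so T_k x is Cauchy and D := SOT-lim T_k is again a
   positive contraction.  The orthogonal projections onto ker(I - D) and ker D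
   are the strong limits of D^(2k) and (I - D)^(2k), which yields the
   decomposition of H.  As <T_k A_i^* x, A_i^* x> is one term of the series for
   <T_(k+1) x, x>, in the limit <D A_i^* x, A_i^* x> <= <D x, x>, and likewise
   for I - D thanks to T_1 <= I; hence A_i^* preserves ker D and ker(I - D).
   When D is a projection, adjointness transfers the invariance to A_i. *)

Lemma nonincreasing_homo (R : numDomainType) (a : nat -> R) :
  (forall k, a k.+1 <= a k) -> {homo a : k m / (k <= m)%N >-> (m <= k)%R}.
Proof.
move=> a_dec; apply: (homo_leq (r := fun x y => y <= x)) => // x y z h1 h2.
exact: le_trans h2 h1.
Qed.

Lemma nonincreasing_cauchy (R : realType) (a : nat -> R) :
  (forall k, 0 <= a k) -> (forall k, a k.+1 <= a k) ->
  forall e, 0 < e -> exists N, forall k m, (N <= k <= m)%N -> a k - a m < e.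
Proof.
move=> a_ge0 a_dec e e_gt0.
have a_inf : has_inf (range a) by split; [exists (a 0%N), 0%N | exists 0 => _ [k _ <-]].
have [_ [N _ <-] aN_lt] := inf_adherent e_gt0 a_inf.
exists N => k m /andP[Nk km].
have := nonincreasing_homo a_dec Nk; have : inf (range a) <= a m.
  by apply: ge_inf; [case: a_inf | exists m].
lra.
Qed.

Lemma quadratic_ge0_discr (R : realFieldType) (p b q : R) :
  0 <= q -> (forall t, 0 <= p + 2 * t * b + t ^+ 2 * q) -> b ^+ 2 <= p * q.
Proof.
move=> q_ge0 quad_ge0; have [q0|q_neq0] := eqVneq q 0.
  have [b0|b_neq0] := eqVneq b 0; first by rewrite b0 q0; lra.
  have := quad_ge0 (- (p + 1) / (2 * b)).
  have -> : p + 2 * (- (p + 1) / (2 * b)) * b + (- (p + 1) / (2 * b)) ^+ 2 * q = -1.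
    by rewrite q0; field; rewrite b_neq0.
  lra.
have q_gt0 : 0 < q by rewrite lt_def q_neq0.
have := quad_ge0 (- b / q).
have -> : p + 2 * (- b / q) * b + (- b / q) ^+ 2 * q = (p * q - b ^+ 2) / q by field.
by rewrite pmulr_lge0 ?invr_gt0 // subr_ge0.
Qed.

Section ComplexParts.
Variable R : rcfType.
Implicit Types z : R[i].

Lemma Re_realM (t : R) z : complex.Re ((t%:C)%C * z) = t * complex.Re z.
Proof. by case: z => a b; rewrite /= mul0r subr0. Qed.

Lemma Re_conjiM z : complex.Re (Num.conj 'i%C * z) = complex.Im z.
Proof. by case: z => a b; rewrite /= mul0r sub0r mulNr mul1r opprK. Qed.

End ComplexParts.

Section SesquilinearForm.
Variables (R : rcfType) (V : lmodType R[i]).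

Definition hermitian_form (f : V -> V -> R[i]) : Prop :=
  (forall (a : R[i]) x y z, f (a *: x + y) z = a * f x z + f y z) /\
  (forall x y, f y x = Num.conj (f x y)).

Variable f : V -> V -> R[i].
Hypothesis f_herm : hermitian_form f.

Lemma formC x y : f y x = Num.conj (f x y). Proof. by case: f_herm. Qed.

Lemma formDl x y z : f (x + y) z = f x z + f y z.
Proof. by case: f_herm => f_lin _; have := f_lin 1 x y z; rewrite scale1r mul1r. Qed.

Lemma form0l z : f 0 z = 0.
Proof. by apply: (addrI (f 0 z)); rewrite -formDl !addr0. Qed.

Lemma formZl a x z : f (a *: x) z = a * f x z.
Proof. by case: f_herm => f_lin _; have := f_lin a x 0 z; rewrite !addr0 form0l addr0. Qed.

Lemma formNl x z : f (- x) z = - f x z.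
Proof. by rewrite -scaleN1r formZl mulN1r. Qed.

Lemma formBl x y z : f (x - y) z = f x z - f y z.
Proof. by rewrite formDl formNl. Qed.

Lemma formDr x y z : f z (x + y) = f z x + f z y.
Proof. by rewrite formC formDl rmorphD /= -!formC. Qed.

Lemma formZr a x z : f z (a *: x) = Num.conj a * f z x.
Proof. by rewrite formC formZl rmorphM /= -formC. Qed.

Lemma form0r z : f z 0 = 0.
Proof. by rewrite formC form0l conjC0. Qed.

Lemma formNr x z : f z (- x) = - f z x.
Proof. by rewrite formC formNl rmorphN /= -formC. Qed.

Lemma formBr x y z : f z (x - y) = f z x - f z y.
Proof. by rewrite formDr formNr. Qed.

Lemma Re_formC x y : complex.Re (f y x) = complex.Re (f x y).
Proof. by rewrite formC; case: (f x y). Qed.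

Hypothesis f_ge0 : forall x, 0 <= complex.Re (f x x).

Lemma form_CS x y : complex.Re (f x y) ^+ 2 <= complex.Re (f x x) * complex.Re (f y y).
Proof.
apply: quadratic_ge0_discr => // t; have := f_ge0 (x + (t%:C)%C *: y).
have conj_t : Num.conj (t%:C)%C = (t%:C)%C by apply/eqP; rewrite eq_complex /= oppr0 !eqxx.
rewrite formDl !formDr !formZl !formZr conj_t !raddfD /= !Re_realM Re_formC.
by congr (0 <= _); ring.
Qed.

Lemma form_eq0 x y : complex.Re (f x x) = 0 -> f x y = 0.
Proof.
move=> fxx0; have Re_fx0 w : complex.Re (f x w) = 0.
  by apply/eqP; rewrite -sqrf_eq0 eq_le sqr_ge0 andbT; have := form_CS x w; rewrite fxx0 mul0r.
by apply/eqP; rewrite eq_complex Re_fx0 -(Re_conjiM (f x y)) -formZr Re_fx0 /= eqxx.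
Qed.

End SesquilinearForm.

Definition is_group_norm (R : realFieldType) (T : zmodType) (nm : T -> R) : Prop :=
  [/\ nm 0 = 0, forall x, nm x = 0 -> x = 0, forall x, nm (- x) = nm x &
      forall x y, nm (x + y) <= nm x + nm y].

(* [hconv ip] is convertible to [cvg_wrt (hnorm ip)]. *)
Definition cvg_wrt (R : realFieldType) (T : zmodType) (nm : T -> R) (u : nat -> T) a : Prop :=
  forall e : R, 0 < e -> exists K, forall k, (K <= k)%N -> nm (u k - a) < e.

Section GroupNormLimits.
Variables (R : realFieldType) (T : zmodType) (nm : T -> R).
Hypothesis nm_norm : is_group_norm nm.

Lemma group_norm_ge0 x : 0 <= nm x.
Proof.
case: nm_norm => nm0 _ nmN nmD; have := nmD x (- x).
rewrite subrr nm0 nmN => h; lra.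
Qed.

Lemma cvg_wrt_unique u a b : cvg_wrt nm u a -> cvg_wrt nm u b -> a = b.
Proof.
case: nm_norm => _ nm_eq0 nmN nmD ua ub; apply/eqP; rewrite -subr_eq0; apply/eqP/nm_eq0.
apply/eqP; rewrite eq_le group_norm_ge0 andbT; apply/ler_addgt0Pr => e e_gt0.
have e2_gt0 : 0 < e / 2 by rewrite divr_gt0.
have [Ka Ha] := ua _ e2_gt0; have [Kb Hb] := ub _ e2_gt0.
have := Ha _ (leq_maxl Ka Kb); have := Hb _ (leq_maxr Ka Kb).
move: (u (maxn Ka Kb)) => w hb ha.
have -> : a - b = (w - b) + - (w - a) by rewrite opprB [RHS]addrC addrA subrK.
by apply: le_trans (nmD _ _) _; rewrite nmN add0r; lra.
Qed.

Lemma cvg_wrt_cst a : cvg_wrt nm (fun=> a) a.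
Proof. by case: nm_norm => nm0 _ _ _ e e_gt0; exists 0%N => k _; rewrite subrr nm0. Qed.

Lemma eq_cvg_wrt u v a : (forall k, u k = v k) -> cvg_wrt nm u a -> cvg_wrt nm v a.
Proof. by move=> uv ua e /ua[K HK]; exists K => k; rewrite -uv; apply: HK. Qed.

Lemma cvg_wrtS u a : cvg_wrt nm u a -> cvg_wrt nm (fun k => u k.+1) a.
Proof. by move=> ua e /ua[K HK]; exists K => k Kk; apply/HK/leqW. Qed.

Lemma cvg_wrtD u v a b :
  cvg_wrt nm u a -> cvg_wrt nm v b -> cvg_wrt nm (fun k => u k + v k) (a + b).
Proof.
case: nm_norm => _ _ _ nmD ua vb e e_gt0.
have e2_gt0 : 0 < e / 2 by rewrite divr_gt0.
have [Ka Ha] := ua _ e2_gt0; have [Kb Hb] := vb _ e2_gt0.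
exists (maxn Ka Kb) => k; rewrite geq_max => /andP[/Ha hu /Hb hv].
by rewrite opprD addrACA; apply: le_lt_trans (nmD _ _) _; lra.
Qed.

Lemma cvg_wrtN u a : cvg_wrt nm u a -> cvg_wrt nm (fun k => - u k) (- a).
Proof.
by case: nm_norm => _ _ nmN _ ua e /ua[K HK]; exists K => k; rewrite -opprD nmN; apply: HK.
Qed.

Lemma cvg_wrtB u v a b :
  cvg_wrt nm u a -> cvg_wrt nm v b -> cvg_wrt nm (fun k => u k - v k) (a - b).
Proof. by move=> ua /cvg_wrtN; apply: cvg_wrtD. Qed.

Lemma cvg_wrt_lipschitz (T' : zmodType) (nm' : T' -> R) (f : T -> T') (c : R) u a :
  (forall x y, nm' (f x - f y) <= c * nm (x - y)) ->
  cvg_wrt nm u a -> cvg_wrt nm' (fun k => f (u k)) (f a).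
Proof.
move=> f_lip ua e e_gt0; have c_ge0 := normr_ge0 c.
have e'_gt0 : 0 < e / (`|c| + 1) by rewrite divr_gt0 // ltr_wpDl.
have [K HK] := ua _ e'_gt0; exists K => k /HK uk_lt; apply: le_lt_trans (f_lip _ _) _.
have := group_norm_ge0 (u k - a); have := ler_norm c.
have : `|c| * (e / (`|c| + 1)) < e by rewrite mulrA ltr_pdivrMr ?ltr_wpDl //; nra.
move: uk_lt; set d := nm _; set e' := e / _ => *; nra.
Qed.

End GroupNormLimits.

Notation rcvg := (cvg_wrt Num.norm).

Lemma normr_group_norm {R : realFieldType} : is_group_norm (@Num.norm R R).
Proof. by split; [exact: normr0 | exact: normr0_eq0 | exact: normrN | exact: ler_normD]. Qed.

Section RealLimits.
Variable R : realFieldType.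
Implicit Types s t : nat -> R.

Lemma cvg_wrt_ub s l c K : rcvg s l -> (forall k, (K <= k)%N -> s k <= c) -> l <= c.
Proof.
move=> sl s_le; rewrite leNgt; apply/negP => c_lt_l.
have /sl[K' HK'] : 0 < l - c by rewrite subr_gt0.
have := HK' _ (leq_maxr K K'); have := s_le _ (leq_maxl K K').
move: (s (maxn K K')) => sk; rewrite ltr_norml => h /andP[h1 h2]; lra.
Qed.

Lemma cvg_wrt_lb s l c K : rcvg s l -> (forall k, (K <= k)%N -> c <= s k) -> c <= l.
Proof.
move=> /(cvg_wrtN normr_group_norm) sl s_ge; rewrite -lerN2.
by apply: (cvg_wrt_ub sl) => k /s_ge; rewrite lerN2.
Qed.

Lemma ler_cvg_wrt s t l m : rcvg s l -> rcvg t m -> (forall k, s k <= t k) -> l <= m.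
Proof.
move=> sl tm st; rewrite -subr_ge0.
apply: (cvg_wrt_lb (K := 0%N) (cvg_wrtB normr_group_norm tm sl)) => k _.
by rewrite subr_ge0.
Qed.

Lemma series_term_le (P : pred nat) (F : nat -> R) l i :
  (forall j, P j -> 0 <= F j) -> P i ->
  rcvg (fun N => \sum_(j < N | P j) F j) l -> F i <= l.
Proof.
move=> F_ge0 Pi Fl; apply: (cvg_wrt_lb (K := i.+1) Fl) => N iN.
rewrite (bigD1 (Ordinal iN)) //= lerDl; apply: sumr_ge0 => j /andP[Pj _].
exact: F_ge0.
Qed.

End RealLimits.

Section LinearOperators.
Variables (R : realType) (V : lmodType R[i]) (T : V -> V).
Hypothesis T_lin : is_linear_op T.

Lemma linopD x y : T (x + y) = T x + T y.
Proof. by have := T_lin 1 x y; rewrite !scale1r. Qed.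

Lemma linop0 : T 0 = 0.
Proof. by apply: (addrI (T 0)); rewrite -linopD !addr0. Qed.

Lemma linopZ a x : T (a *: x) = a *: T x.
Proof. by have := T_lin a x 0; rewrite linop0 !addr0. Qed.

Lemma linopB x y : T (x - y) = T x - T y.
Proof. by rewrite linopD -scaleN1r linopZ scaleN1r. Qed.

End LinearOperators.

Section InnerProduct.
Variables (R : realType) (V : lmodType R[i]) (ip : V -> V -> R[i]).
Hypothesis ip_inner : is_inner_product ip.
Local Notation Re := (@complex.Re R).
Local Notation hnorm := (hnorm ip).
Local Notation hconv := (hconv ip).

Lemma inner_product_hermitian : hermitian_form ip.
Proof. by case: ip_inner. Qed.
Let ip_herm := inner_product_hermitian.

Definition sqnorm x := Re (ip x x).

Lemma ip_self x : ip x x = ((sqnorm x)%:C)%C.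
Proof. by case: ip_inner => _ _ ip_ge0 _; rewrite RRe_real // ger0_real. Qed.

Lemma sqnorm_ge0 x : 0 <= sqnorm x.
Proof. by case: ip_inner => _ _ ip_ge0 _; have := ip_ge0 x; rewrite lecE => /andP[]. Qed.

Lemma sqnorm_eq0 x : sqnorm x = 0 -> x = 0.
Proof. by case: ip_inner => _ _ _ ip_eq0 sq0; apply: ip_eq0; rewrite ip_self sq0. Qed.

Lemma sqnormD x y : sqnorm (x + y) = sqnorm x + 2 * Re (ip x y) + sqnorm y.
Proof.
rewrite /sqnorm (formDl ip_herm) !(formDr ip_herm) !raddfD /=.
by rewrite (Re_formC ip_herm y x); ring.
Qed.

Lemma sqnormZ a x : sqnorm (a *: x) = (Re a ^+ 2 + complex.Im a ^+ 2) * sqnorm x.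
Proof.
by rewrite /sqnorm (formZl ip_herm) (formZr ip_herm) ip_self; case: a => a1 a2 /=; ring.
Qed.

Lemma ip_ext v w : (forall y, ip v y = ip w y) -> v = w.
Proof.
move=> vw; apply/eqP; rewrite -subr_eq0; apply/eqP/sqnorm_eq0.
by rewrite /sqnorm (formBl ip_herm) vw -(formBl ip_herm) subrr (form0l ip_herm).
Qed.

Lemma ip_eq0_Re v y : Re (ip v y) = 0 -> Re (ip v ('i%C *: y)) = 0 -> ip v y = 0.
Proof.
rewrite (formZr ip_herm) Re_conjiM => Re0 Im0.
by apply/eqP; rewrite eq_complex Re0 Im0 !eqxx.
Qed.

Lemma hnorm_ge0 x : 0 <= hnorm x. Proof. exact: sqrtr_ge0. Qed.

Lemma hnorm_sq x : hnorm x ^+ 2 = sqnorm x. Proof. exact/sqr_sqrtr/sqnorm_ge0. Qed.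

Lemma hnorm_le x c : 0 <= c -> sqnorm x <= c ^+ 2 -> hnorm x <= c.
Proof. by move=> c_ge0; rewrite -hnorm_sq => h; have := hnorm_ge0 x; nra. Qed.

Lemma hnorm_lt x c : 0 <= c -> sqnorm x < c ^+ 2 -> hnorm x < c.
Proof. by move=> c_ge0; rewrite -hnorm_sq => h; have := hnorm_ge0 x; nra. Qed.

Lemma Re_ip_le x y : `|Re (ip x y)| <= hnorm x * hnorm y.
Proof.
have := form_CS ip_herm sqnorm_ge0 x y; rewrite -/(sqnorm x) -/(sqnorm y) -!hnorm_sq.
rewrite -exprMn; have := mulr_ge0 (hnorm_ge0 x) (hnorm_ge0 y).
move: (Re _) (hnorm x * hnorm y) => b d d_ge0 CS.
by rewrite ler_norml; apply/andP; split; nra.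
Qed.

Lemma hnormD x y : hnorm (x + y) <= hnorm x + hnorm y.
Proof.
apply: hnorm_le; first by rewrite addr_ge0 ?hnorm_ge0.
rewrite sqnormD -!hnorm_sq; have := ler_norm (Re (ip x y)); have := Re_ip_le x y; nra.
Qed.

Lemma hnormZ a x :
  hnorm (a *: x) = Num.sqrt (Re a ^+ 2 + complex.Im a ^+ 2) * hnorm x.
Proof. by rewrite /Defs.hnorm -!/(sqnorm _) sqnormZ sqrtrM // addr_ge0 ?sqr_ge0. Qed.

Lemma hnorm_group_norm : is_group_norm hnorm.
Proof.
split => [|x|x|]; last exact: hnormD.
- by rewrite /Defs.hnorm -/(sqnorm 0) /sqnorm (form0l ip_herm) sqrtr0.
- by move=> nx0; apply: sqnorm_eq0; rewrite -hnorm_sq nx0 expr0n.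
- by rewrite -scaleN1r hnormZ /= oppr0 expr0n addr0 sqrtr_sqr normrN normr1 mul1r.
Qed.
Let hnorm_norm := hnorm_group_norm.

Lemma hconvZ c u a : hconv u a -> hconv (fun k => c *: u k) (c *: a).
Proof.
apply: (cvg_wrt_lipschitz (f := fun v => c *: v) hnorm_norm) => x y.
by rewrite -scalerBr hnormZ.
Qed.

Lemma hconv_op T M u a : is_linear_op T -> bounded_by ip T M ->
  hconv u a -> hconv (fun k => T (u k)) (T a).
Proof.
move=> T_lin T_M; apply: (cvg_wrt_lipschitz (f := T) hnorm_norm) => x y.
by rewrite -linopB //; apply: T_M.
Qed.

Lemma cvg_Re_ip u a y : hconv u a -> rcvg (fun k => Re (ip (u k) y)) (Re (ip a y)).
Proof.
apply: (cvg_wrt_lipschitz (f := fun v => Re (ip v y)) (c := hnorm y) hnorm_norm).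
by move=> v w; rewrite -raddfB -(formBl ip_herm) mulrC Re_ip_le.
Qed.

Definition selfadjoint (T : V -> V) := is_adjoint ip T T.

Definition qform (T : V -> V) x := Re (ip (T x) x).

Definition pos_contraction (T : V -> V) :=
  [/\ is_linear_op T, selfadjoint T, forall x, 0 <= qform T x & forall x, qform T x <= sqnorm x].

Lemma selfadjoint_Re T : is_linear_op T ->
  (forall x y, Re (ip (T x) y) = Re (ip x (T y))) -> selfadjoint T.
Proof.
move=> T_lin T_Re x y; apply/eqP; rewrite eq_complex T_Re eqxx /=.
by rewrite -!Re_conjiM -!(formZr ip_herm) T_Re linopZ.
Qed.

Lemma adjoint_sym T Ts x y : is_adjoint ip T Ts -> ip (Ts x) y = ip x (T y).
Proof. by move=> TTs; rewrite (formC ip_herm) -TTs -(formC ip_herm). Qed.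

Lemma adjoint_linear T Ts : is_adjoint ip T Ts -> is_linear_op Ts.
Proof.
move=> TTs a x y; apply: ip_ext => z.
by rewrite !(adjoint_sym _ _ TTs) !(formDl ip_herm) !(formZl ip_herm) !(adjoint_sym _ _ TTs).
Qed.

Lemma fixed_ker_orthogonal P x y : selfadjoint P -> P x = x -> P y = 0 -> ip x y = 0.
Proof. by move=> P_sa Px Py; rewrite -Px P_sa Py (form0r ip_herm). Qed.

Lemma qform_hermitian T : is_linear_op T -> selfadjoint T ->
  hermitian_form (fun x y => ip (T x) y).
Proof.
move=> T_lin T_sa; split=> [a x y z|x y]; first by rewrite T_lin (formDl ip_herm) (formZl ip_herm).
by rewrite T_sa (formC ip_herm).
Qed.

Lemma pos_qform_eq0 T x : is_linear_op T -> selfadjoint T ->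
  (forall z, 0 <= qform T z) -> qform T x = 0 -> T x = 0.
Proof.
move=> T_lin T_sa T_ge0 qx0; apply: sqnorm_eq0.
by rewrite /sqnorm (form_eq0 (qform_hermitian T_lin T_sa) T_ge0 _ qx0) raddf0.
Qed.

Lemma contraction_qform_le T x : bounded_by ip T 1 -> qform T x <= sqnorm x.
Proof.
move=> T1; apply: le_trans (ler_norm _) _; apply: le_trans (Re_ip_le _ _) _.
rewrite -hnorm_sq expr2 ler_wpM2r ?hnorm_ge0 //.
by have := T1 x; rewrite mul1r.
Qed.

Lemma pos_contraction_sq T x : pos_contraction T -> sqnorm (T x) <= qform T x.
Proof.
case=> T_lin T_sa T_ge0 T_le1.
have := form_CS (qform_hermitian T_lin T_sa) T_ge0 x (T x).
rewrite /= -/(sqnorm (T x)) -/(qform T x) -/(qform T (T x)).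
have := T_le1 (T x); have := T_ge0 x; have := sqnorm_ge0 (T x).
move: (sqnorm _) (qform T x) (qform T (T x)) => s q q' *; nra.
Qed.

Lemma pos_contraction_bounded T : pos_contraction T -> bounded_by ip T 1.
Proof.
move=> T_pc x; rewrite mul1r; apply: hnorm_le; first exact: hnorm_ge0.
rewrite hnorm_sq; apply: le_trans (pos_contraction_sq x T_pc) _.
by case: T_pc => _ _ _; apply.
Qed.

Lemma pos_contraction_bounded_op T : pos_contraction T -> bounded_op ip T.
Proof. by move=> T_pc; split; [case: T_pc | exists 1; apply: pos_contraction_bounded]. Qed.

Lemma qformC T x : qform (fun x => x - T x) x = sqnorm x - qform T x.
Proof. by rewrite /qform (formBl ip_herm) raddfB. Qed.

Lemma pos_contractionC T : pos_contraction T -> pos_contraction (fun x => x - T x).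
Proof.
case=> T_lin T_sa T_ge0 T_le1; split=> [a x y|x y|x|x]; rewrite ?qformC.
- by rewrite T_lin scalerBr opprD addrACA.
- by rewrite (formBl ip_herm) (formBr ip_herm) T_sa.
- by rewrite subr_ge0.
- by rewrite lerBlDr lerDl.
Qed.

Definition nonincreasing_pc (T : nat -> V -> V) :=
  (forall k, pos_contraction (T k)) /\ (forall k x, qform (T k.+1) x <= qform (T k) x).

(* 0 <= T_k - T_m <= I, and every positive contraction S satisfies S^2 <= S. *)
Lemma nonincreasing_pc_dist T k m x : nonincreasing_pc T -> (k <= m)%N ->
  sqnorm (T k x - T m x) <= qform (T k) x - qform (T m) x.
Proof.
move=> [T_pc T_le] km; pose S z := T k z - T m z.
have qS z : qform S z = qform (T k) z - qform (T m) z.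
  by rewrite /qform (formBl ip_herm) raddfB.
have S_pc : pos_contraction S.
  have [Tk_lin Tk_sa Tk_ge0 Tk_le1] := T_pc k; have [Tm_lin Tm_sa Tm_ge0 _] := T_pc m.
  split=> [a u v|u v|z|z]; rewrite ?qS.
  - by rewrite /S Tk_lin Tm_lin scalerBr opprD addrACA.
  - by rewrite /S (formBl ip_herm) (formBr ip_herm) Tk_sa Tm_sa.
  - by rewrite subr_ge0; apply: (nonincreasing_homo (a := fun j => qform (T j) z)).
  - by have := Tk_le1 z; have := Tm_ge0 z; lra.
by rewrite -qS; apply: (pos_contraction_sq x S_pc).
Qed.

Lemma sot_limit_linear T D :
  (forall k, is_linear_op (T k)) -> sot_limit ip T D -> is_linear_op D.
Proof.
move=> T_lin TD a x y; apply: (cvg_wrt_unique hnorm_norm (TD (a *: x + y))).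
by apply: eq_cvg_wrt (cvg_wrtD hnorm_norm (hconvZ a (TD x)) (TD y)) => k; rewrite T_lin.
Qed.

Lemma sot_limit_qform_le T D k x : nonincreasing_pc T -> sot_limit ip T D ->
  qform D x <= qform (T k) x.
Proof.
move=> [_ T_le] TD; apply: (cvg_wrt_ub (K := k) (cvg_Re_ip x (TD x))) => m km.
exact: (nonincreasing_homo (a := fun j => qform (T j) x) (T_le^~ x) km).
Qed.

Lemma sot_limit_pos_contraction T D : nonincreasing_pc T -> sot_limit ip T D ->
  pos_contraction D.
Proof.
move=> T_dec TD; have [T_pc _] := T_dec.
have D_lin : is_linear_op D by apply: sot_limit_linear TD => k; case: (T_pc k).
split=> // [|x|x]; first apply: selfadjoint_Re => // x y.
- rewrite (Re_formC ip_herm (D y) x).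
  apply: (cvg_wrt_unique normr_group_norm (cvg_Re_ip y (TD x))).
  apply: eq_cvg_wrt (cvg_Re_ip x (TD y)) => k.
  by case: (T_pc k) => _ T_sa _ _; rewrite T_sa (Re_formC ip_herm).
- apply: (cvg_wrt_lb (K := 0%N) (cvg_Re_ip x (TD x))) => k _.
  by case: (T_pc k) => _ _ + _; apply.
- apply: le_trans (sot_limit_qform_le 0 x T_dec TD) _.
  by case: (T_pc 0%N) => _ _ _; apply.
Qed.

(* Even powers, so that <S^(2k) x, x> = ||S^k x||^2. *)
Lemma pos_contraction_iter_double S : pos_contraction S ->
  nonincreasing_pc (fun k => iter (k + k) S).
Proof.
move=> S_pc; have [S_lin S_sa _ _] := S_pc.
have iter_lin k : is_linear_op (iter k S).
  by elim: k => [|k IH] a x y //; rewrite !iterS IH S_lin.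
have iter_sa k : selfadjoint (iter k S).
  by elim: k => [|k IH] x y //; rewrite !iterS S_sa IH -iterSr.
have qE k z : qform (iter (k + k) S) z = sqnorm (iter k S z).
  by rewrite /qform iterD iter_sa.
have sqS w : sqnorm (S w) <= sqnorm w.
  by apply: le_trans (pos_contraction_sq w S_pc) _; case: S_pc => _ _ _; apply.
split=> [k|k z]; last by rewrite !qE iterS.
split=> [||z|z]; rewrite ?qE ?sqnorm_ge0 //.
by elim: k z => // k IH z; rewrite iterS; apply: le_trans (sqS _) (IH z).
Qed.

Lemma pos_contraction_fixed_sq S p : pos_contraction S -> S (S p) = p -> S p = p.
Proof.
move=> S_pc SSp; have [_ S_sa _ S_le1] := S_pc.
have [C_lin C_sa C_ge0 _] := pos_contractionC S_pc.
apply/esym/subr0_eq/(pos_qform_eq0 (T := fun x => x - S x)) => //.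
have sq_eq : sqnorm p = sqnorm (S p) by rewrite /sqnorm -{1}SSp S_sa.
by rewrite qformC; have := pos_contraction_sq p S_pc; have := S_le1 p; lra.
Qed.

Lemma idempotent_decomposition P x : is_linear_op P -> orth_projection ip P ->
  exists k1 k0, [/\ x = k1 + k0, P k1 = k1 & P k0 = 0].
Proof.
move=> P_lin [PP _]; exists (P x), (x - P x).
by rewrite addrC subrK linopB // PP subrr.
Qed.

Lemma orth_projection_reducing P T Ts :
  is_linear_op P -> orth_projection ip P -> is_adjoint ip T Ts ->
  (forall x, P x = x -> P (Ts x) = Ts x) -> (forall x, P x = 0 -> P (Ts x) = 0) ->
  forall x, (P x = x -> P (T x) = T x) /\ (P x = 0 -> P (T x) = 0).
Proof.
move=> P_lin [PP P_sa] TTs Ts_fix Ts_ker x; case: ip_inner => _ _ _ ip_eq0.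
split=> Px; last first.
  apply: ip_eq0; rewrite P_sa PP TTs (formC ip_herm).
  by rewrite (fixed_ker_orthogonal P_sa (Ts_fix _ (PP _)) Px) conjC0.
have Pk0 : P (T x - P (T x)) = 0 by rewrite linopB // PP subrr.
apply/esym/subr0_eq/ip_eq0.
rewrite {1}(formBl ip_herm) P_sa Pk0 (form0r ip_herm) subr0 TTs.
exact: fixed_ker_orthogonal P_sa Px (Ts_ker _ Pk0).
Qed.

Hypothesis ip_complete : forall u, hcauchy ip u -> exists v, hconv u v.

Lemma nonincreasing_pc_sot_limit T : nonincreasing_pc T -> exists D, sot_limit ip T D.
Proof.
move=> T_dec; have [T_pc T_le] := T_dec.
suff /choice[D TD] : forall x, exists v, hconv (fun k => T k x) v by exists D.
move=> x; apply: ip_complete => e e_gt0.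
have q_ge0 k : 0 <= qform (T k) x by case: (T_pc k).
have [N HN] := nonincreasing_cauchy q_ge0 (T_le^~ x) (exprn_gt0 2 e_gt0).
exists N => k l; wlog kl : k l / (k <= l)%N => [H Nk Nl|Nk _].
  case/orP: (leq_total k l) => [kl|lk]; first exact: H.
  by case: hnorm_norm => _ _ nmN _; rewrite -opprB nmN; apply: H.
apply: hnorm_lt (ltW e_gt0) _; apply: le_lt_trans (nonincreasing_pc_dist x T_dec kl) _.
by apply: HN; rewrite Nk.
Qed.

Lemma pos_contraction_fixed_projection S x : pos_contraction S ->
  exists p, S p = p /\ forall y, S y = y -> ip (x - p) y = 0.
Proof.
move=> S_pc; have [S_lin _ _ _] := S_pc.
have U_dec := pos_contraction_iter_double S_pc; have [U_pc _] := U_dec.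
have [P UP] := nonincreasing_pc_sot_limit U_dec.
have S1 := pos_contraction_bounded S_pc.
exists (P x); split.
  apply: pos_contraction_fixed_sq => //.
  apply: (cvg_wrt_unique hnorm_norm (hconv_op S_lin S1 (hconv_op S_lin S1 (UP x)))).
  by apply: eq_cvg_wrt (cvg_wrtS (UP x)) => k; rewrite addSn addnS !iterS.
have Re0 w : S w = w -> Re (ip (x - P x) w) = 0.
  move=> Sw; apply/eqP; rewrite (formBl ip_herm) raddfB subr_eq0; apply/eqP.
  apply: (cvg_wrt_unique normr_group_norm (cvg_wrt_cst normr_group_norm _)).
  apply: eq_cvg_wrt (cvg_Re_ip w (UP x)) => k.
  by case: (U_pc k) => _ U_sa _ _; rewrite U_sa iter_fix.
by move=> y Sy; apply: ip_eq0_Re; apply: Re0; rewrite ?linopZ ?Sy.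
Qed.

Lemma pos_contraction_decomposition D x : pos_contraction D ->
  exists m k1 k0, [/\ x = m + k1 + k0, D k1 = k1, D k0 = 0 &
                      forall y, D y = y \/ D y = 0 -> ip m y = 0].
Proof.
move=> D_pc; have [_ D_sa _ _] := D_pc.
have [k1 [Dk1 k1_orth]] := pos_contraction_fixed_projection x D_pc.
have [k0 [Ck0 k0_orth]] := pos_contraction_fixed_projection x (pos_contractionC D_pc).
have Dk0 : D k0 = 0 by apply/oppr_inj/(addrI k0); rewrite [LHS]Ck0 oppr0 addr0.
exists (x - k0 - k1), k1, k0; split=> //; first by rewrite !subrK.
move=> y [Dy|Dy].
  rewrite addrAC (formBl ip_herm) k1_orth // (formC ip_herm y k0).
  by rewrite (fixed_ker_orthogonal D_sa Dy Dk0) conjC0 subrr.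
rewrite (formBl ip_herm) k0_orth /=; last by rewrite Dy subr0.
by rewrite (fixed_ker_orthogonal D_sa Dk1 Dy) subrr.
Qed.

End InnerProduct.

Section KrausMap.
Variables (R : realType) (V : lmodType R[i]) (ip : V -> V -> R[i]).
Variables (n : option nat) (A As : nat -> V -> V) (phi : (V -> V) -> (V -> V)).
Hypothesis ip_inner : is_inner_product ip.
Hypothesis A_adj : forall i, in_index n i -> bounded_op ip (A i) /\ is_adjoint ip (A i) (As i).
Hypothesis phi_kraus : is_kraus_map ip n A As phi.
Hypothesis phi_norm : norm_le1 ip phi.
Local Notation Re := (@complex.Re R).
Local Notation qform := (qform ip).
Local Notation sqnorm := (sqnorm ip).
Local Notation pos_contraction := (pos_contraction ip).
Let ip_herm := inner_product_hermitian ip_inner.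
Let hnorm_norm := hnorm_group_norm ip_inner.

Lemma kraus_linear X : bounded_op ip X -> is_linear_op (phi X).
Proof.
move=> X_bd a x y; have [X_lin _] := X_bd.
apply: (cvg_wrt_unique hnorm_norm (phi_kraus X_bd (a *: x + y))).
apply: eq_cvg_wrt (cvg_wrtD hnorm_norm (hconvZ ip_inner a (phi_kraus X_bd x))
                                       (phi_kraus X_bd y)) => k.
rewrite /kraus_psum scaler_sumr -big_split; apply: eq_bigr => i ni.
have [[A_lin _] AAs] := A_adj ni.
by rewrite (adjoint_linear ip_inner AAs) X_lin A_lin.
Qed.

Lemma cvg_Re_kraus X x y : bounded_op ip X ->
  rcvg (fun N => \sum_(i < N | in_index n i) Re (ip (X (As i x)) (As i y)))
       (Re (ip (phi X x) y)).
Proof.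
move=> X_bd; apply: eq_cvg_wrt (cvg_Re_ip ip_inner y (phi_kraus X_bd x)) => N.
rewrite /kraus_psum (big_morph (ip^~ y) (fun u v => formDl ip_herm u v y) (form0l ip_herm y)).
rewrite raddf_sum; apply: eq_bigr => i ni.
by have [_ AAs] := A_adj ni; rewrite AAs.
Qed.

Lemma kraus_selfadjoint X : bounded_op ip X -> selfadjoint ip X -> selfadjoint ip (phi X).
Proof.
move=> X_bd X_sa; apply: (selfadjoint_Re ip_inner (kraus_linear X_bd)) => x y.
rewrite (Re_formC ip_herm (phi X y) x).
apply: (cvg_wrt_unique normr_group_norm (cvg_Re_kraus x y X_bd)).
apply: eq_cvg_wrt (cvg_Re_kraus y x X_bd) => N.
by apply: eq_bigr => i _; rewrite (Re_formC ip_herm) X_sa.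
Qed.

Lemma kraus_pos_contraction X : pos_contraction X -> pos_contraction (phi X).
Proof.
move=> X_pc; have X_bd := pos_contraction_bounded_op ip_inner X_pc.
have [_ X_sa X_ge0 _] := X_pc; split=> [||x|x].
- exact: kraus_linear.
- exact: kraus_selfadjoint.
- apply: (cvg_wrt_lb (K := 0%N) (cvg_Re_kraus x x X_bd)) => N _.
  by apply: sumr_ge0 => i _; apply: X_ge0.
- apply: (contraction_qform_le ip_inner); apply: phi_norm X_bd _.
  exact: pos_contraction_bounded.
Qed.

Lemma kraus_term_le X i x : bounded_op ip X -> (forall z, 0 <= qform X z) ->
  in_index n i -> qform X (As i x) <= qform (phi X) x.
Proof.
move=> X_bd X_ge0 ni.
by apply: (series_term_le (F := fun j => qform X (As j x))) ni (cvg_Re_kraus x x X_bd).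
Qed.

Lemma kraus_term_leB X Y i x : bounded_op ip X -> bounded_op ip Y ->
  (forall z, qform Y z <= qform X z) -> in_index n i ->
  qform X (As i x) - qform Y (As i x) <= qform (phi X) x - qform (phi Y) x.
Proof.
move=> X_bd Y_bd YX ni.
apply: (series_term_le (F := fun j => qform X (As j x) - qform Y (As j x))) ni _.
  by move=> j _; rewrite subr_ge0.
apply: eq_cvg_wrt (cvg_wrtB normr_group_norm (cvg_Re_kraus x x X_bd)
                                           (cvg_Re_kraus x x Y_bd)) => N.
by rewrite sumrB.
Qed.

Lemma kraus_iter_nonincreasing : nonincreasing_pc ip (fun k => iter k phi id).
Proof.
have id_pc : pos_contraction id.
  by split=> [a x y|x y|x|x]; [by [] | by [] | exact: sqnorm_ge0 | exact: lexx].
have T_pc k : pos_contraction (iter k phi id).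
  by elim: k => // k IH; apply: kraus_pos_contraction.
have T_bd k := pos_contraction_bounded_op ip_inner (T_pc k).
split=> // k x; elim: k x => [|k IH] x; first by case: (T_pc 1%N) => _ _ _; apply.
apply: (ler_cvg_wrt (cvg_Re_kraus x x (T_bd k.+1)) (cvg_Re_kraus x x (T_bd k))) => N.
by apply: ler_sum => i _; apply: IH.
Qed.

Variable D : V -> V.
Hypothesis iter_D : sot_limit ip (fun k => iter k phi id) D.

Let D_pc : pos_contraction D :=
  sot_limit_pos_contraction ip_inner kraus_iter_nonincreasing iter_D.

Lemma kraus_limit_qform_As i x : in_index n i ->
  qform D (As i x) <= qform D x /\
  sqnorm (As i x) - qform D (As i x) <= sqnorm x - qform D x.
Proof.
move=> ni; have [T_pc _] := kraus_iter_nonincreasing.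
have T_bd k := pos_contraction_bounded_op ip_inner (T_pc k).
have cvg_q z := cvg_Re_ip ip_inner z (iter_D z).
have cvg_qC z := cvg_wrtB normr_group_norm (cvg_wrt_cst normr_group_norm (sqnorm z)) (cvg_q z).
split.
  apply: (ler_cvg_wrt (cvg_q _) (cvg_wrtS (cvg_q x))) => k.
  by case: (T_pc k) => _ _ T_ge0 _; apply: kraus_term_le.
apply: (ler_cvg_wrt (cvg_qC _) (cvg_wrtS (cvg_qC x))) => k.
apply: le_trans (kraus_term_leB x (T_bd 0%N) (T_bd k) _ ni) _.
  by case: (T_pc k) => _ _ _.
by apply: lerD; [case: (T_pc 1%N) => _ _ _; apply | exact: lexx].
Qed.

Lemma kraus_limit_ker_As i x : in_index n i -> D x = 0 -> D (As i x) = 0.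
Proof.
move=> ni Dx; have [D_lin D_sa D_ge0 _] := D_pc.
apply: (pos_qform_eq0 ip_inner D_lin D_sa D_ge0); apply/eqP; rewrite eq_le D_ge0 andbT.
have [+ _] := kraus_limit_qform_As x ni.
by rewrite /(qform D x) Dx (form0l ip_herm) raddf0.
Qed.

Lemma kraus_limit_fixed_As i x : in_index n i -> D x = x -> D (As i x) = As i x.
Proof.
move=> ni Dx; have [C_lin C_sa C_ge0 _] := pos_contractionC ip_inner D_pc.
apply/esym/subr0_eq/(pos_qform_eq0 ip_inner (T := fun z => z - D z)) => //.
apply/eqP; rewrite eq_le C_ge0 andbT (qformC ip_inner).
have qDx : qform D x = sqnorm x by rewrite /(qform D x) Dx.
by have [_] := kraus_limit_qform_As x ni; rewrite qDx subrr.
Qed.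

End KrausMap.

Theorem theorem4p7 (R : realType) (V : lmodType R[i]) (ip : V -> V -> R[i])
  (n : option nat) (A As : nat -> V -> V) (phi : (V -> V) -> (V -> V)) :
  is_hilbert ip ->
  (forall i, in_index n i -> bounded_op ip (A i) /\ is_adjoint ip (A i) (As i)) ->
  is_kraus_map ip n A As phi ->
  norm_le1 ip phi ->
  (exists D, sot_limit ip (fun k => iter k phi id) D) /\
  (forall D, sot_limit ip (fun k => iter k phi id) D ->
    [/\ (forall x y, D x = x -> D y = 0 -> ip x y = 0),
        (forall x, exists m k1 k0,
           [/\ x = m + k1 + k0, D k1 = k1, D k0 = 0 &
               forall y, D y = y \/ D y = 0 -> ip m y = 0]),
        (forall i x, in_index n i -> D x = x -> D (As i x) = As i x),
        (forall i x, in_index n i -> D x = 0 -> D (As i x) = 0) &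
        (orth_projection ip D ->
          (forall x, exists k1 k0, [/\ x = k1 + k0, D k1 = k1 & D k0 = 0]) /\
          (forall i x, in_index n i ->
             (D x = x -> D (A i x) = A i x /\ D (As i x) = As i x) /\
             (D x = 0 -> D (A i x) = 0 /\ D (As i x) = 0)))]).
Proof.
move=> [ip_inner ip_complete] A_adj phi_kraus phi_norm.
have T_dec := kraus_iter_nonincreasing ip_inner A_adj phi_kraus phi_norm.
split=> [|D iter_D]; first exact: nonincreasing_pc_sot_limit T_dec.
have D_pc := sot_limit_pos_contraction ip_inner T_dec iter_D.
have [D_lin D_sa _ _] := D_pc.
have As_fix := kraus_limit_fixed_As ip_inner A_adj phi_kraus phi_norm iter_D.
have As_ker := kraus_limit_ker_As ip_inner A_adj phi_kraus phi_norm iter_D.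
split=> // [x y|x|D_proj]; first exact: fixed_ker_orthogonal.
  exact: pos_contraction_decomposition.
split=> [x|i x ni]; first exact: idempotent_decomposition x D_lin D_proj.
have [_ AAs] := A_adj i ni.
have [A_fix A_ker] := orth_projection_reducing ip_inner D_lin D_proj AAs
  (fun y => As_fix i y ni) (fun y => As_ker i y ni) x.
by split=> Dx; split; [apply: A_fix | apply: As_fix | apply: A_ker | apply: As_ker].
Qed.
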